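(* Let $\alpha\in\mathbb{C}$ and let $S_n(x)\sim\left(\left(\frac{e^t+1}{2}\right)^{\alpha},\ \frac{t^2}{\log(1+t)}\right)$. Then for $n\ge1$, $$S_n(x)=\sum_{l=0}^{n-1}\binom{n-1}{l}N_l^{(n)}\,E_{n-l}^{(\alpha)}(x).$$
   Context: For invertible $g(t)$ (nonzero constant term) and delta series $f(t)$ ($f(0)=0$, nonzero coefficient of $t$), the Sheffer sequence $S_n(x)\sim(g(t),f(t))$ is the unique polynomial sequence with $\sum_{k\ge0}S_k(y)\frac{t^k}{k!}=\frac{1}{g(\bar f(t))}e^{y\bar f(t)}$ for all $y\in\mathbb{C}$, where $\bar f$ is the compositional inverse of $f$. Complex powers of series with constant term $1$ are defined by $h^a=\exp(a\log h)$. The Narumi polynomials of order $a$ are defined by $\left(\frac{\log(1+t)}{t}\right)^a(1+t)^x=\sum_{n\ge0}N_n^{(a)}(x)\frac{t^n}{n!}$, and the Narumi numbers are $N_n^{(a)}=N_n^{(a)}(0)$. The Euler polynomials of order $\alpha$ are defined by $\left(\frac{2}{e^t+1}\right)^{\alpha}e^{xt}=\sum_{n\ge0}E_n^{(\alpha)}(x)\frac{t^n}{n!}$. *)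

From HB Require Import structures.
From mathcomp Require Import all_boot all_order all_algebra.
Set Implicit Arguments. Unset Strict Implicit. Unset Printing Implicit Defensive.
Import Order.TTheory GRing.Theory Num.Theory.
Local Open Scope ring_scope.

Section FPS.
Variable R : fieldType.

Definition fps := nat -> R.

Definition fone : fps := fun n => (n == 0)%:R.
Definition fX : fps := fun n => (n == 1)%:R.

Definition fadd (a b : fps) : fps := fun n => a n + b n.
Definition fscale (c : R) (a : fps) : fps := fun n => c * a n.
Definition fmul (a b : fps) : fps :=
  fun n => \sum_(i < n.+1) a i * b (n - i)%N.
Definition fpow (a : fps) (k : nat) : fps := iter k (fmul a) fone.

(* composition a(b(t)), for b with zero constant term *)
Definition fcomp (a b : fps) : fps :=
  fun n => \sum_(k < n.+1) a k * fpow b k n.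

(* exp(b) for b with zero constant term *)
Definition fexp (b : fps) : fps :=
  fun n => \sum_(k < n.+1) fpow b k n / (k`!)%:R.

(* log(1 + h) for h with zero constant term *)
Definition flog1p (h : fps) : fps :=
  fun n => \sum_(1 <= k < n.+1) (-1) ^+ k.+1 / k%:R * fpow h k n.

(* log h for h with constant term 1 *)
Definition flog (h : fps) : fps := flog1p (fadd h (fscale (-1) fone)).

(* complex (scalar) power h^a = exp(a log h), for h with constant term 1 *)
Definition fpowc (h : fps) (a : R) : fps := fexp (fscale a (flog h)).

(* multiplicative inverse 1/h, for h with nonzero constant term:
   h = h0 (1 + u), 1/h = h0^-1 * sum_k (-u)^k *)
Definition fps_inv (h : fps) : fps :=
  let u := fun n => if n == 0%N then 0 else h n / h 0%N in
  fun n => (h 0%N)^-1 * \sum_(k < n.+1) fpow (fscale (-1) u) k n.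

(* log(1+t)/t *)
Definition flogq : fps := fun n => flog1p fX n.+1.

(* Narumi numbers N_n^{(a)} = n! [t^n] (log(1+t)/t)^a *)
Definition narumi (n : nat) (a : R) : R := (n`!)%:R * fpowc flogq a n.

(* Euler polynomials E_n^{(alpha)}(x) = n! [t^n] (2/(e^t+1))^alpha e^{xt} *)
Definition euler_poly (n : nat) (alpha x : R) : R :=
  (n`!)%:R *
  fmul (fpowc (fscale 2 (fps_inv (fadd (fexp fX) fone))) alpha)
       (fexp (fscale x fX)) n.

(* S ~ (g, f): sum_k S_k(y) t^k/k! = 1/g(fbar t) * exp(y fbar t), for all y,
   where fbar is the compositional inverse of f. *)
Definition is_sheffer (g f : fps) (S : nat -> {poly R}) : Prop :=
  exists fb : fps, fb 0%N = 0 /\ fcomp f fb = fX /\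
    forall (y : R) (n : nat),
      (S n).[y] = (n`!)%:R * fmul (fps_inv (fcomp g fb)) (fexp (fscale y fb)) n.

End FPS.

(* Let phi(t) = log(1+t)/t, so that f(t) = t^2/log(1+t) = t/phi(t), and let fb
   be the compositional inverse of f. With H(t) = (2/(e^t+1))^alpha e^(xt),
   whose coefficients are E_k^(alpha)(x)/k!, the Sheffer generating function
   1/g(fb) e^(x fb) equals H(fb), hence S_n(x)/n! = sum_k E_k(x)/k! [t^n] fb^k.
   Lagrange inversion, n [t^n] fb^k = k [t^(n-k)] phi^n, and the fact that
   phi^n has coefficients N_l^(n)/l! give the stated formula after collecting
   factorials into binomial coefficients.

   In characteristic 0, uniqueness of solutions of y' = y w
   characterises exp, log and scalar powers. Lagrange inversion is proved
   via a residue formula, and the theorem is assembled at the end. *)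

From Pilot Require Import Defs.
From HB Require Import structures.
From mathcomp Require Import all_boot all_order all_algebra.
From mathcomp Require Import boolp zify ring.
Set Implicit Arguments. Unset Strict Implicit. Unset Printing Implicit Defensive.
Import GRing.Theory.
Local Open Scope ring_scope.

(* The sum and Cauchy product of [Defs] make [fps R] a commutative ring; each
   ring axiom at degree n is read off from the product of truncations. *)
Section FpsRing.
Variable R : fieldType.
Local Notation F := (fps R).

Definition fzero : F := fun _ => 0.
Definition fopp (a : F) : F := fun n => - a n.

Lemma faddA : associative (@fadd R).
Proof. by move=> a b c; apply: funext => n; rewrite /fadd addrA. Qed.
Lemma faddC : commutative (@fadd R).
Proof. by move=> a b; apply: funext => n; rewrite /fadd addrC. Qed.
Lemma fadd0 : left_id fzero (@fadd R).
Proof. by move=> a; apply: funext => n; rewrite /fadd add0r. Qed.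
Lemma faddN : left_inverse fzero fopp (@fadd R).
Proof. by move=> a; apply: funext => n; rewrite /fadd addNr. Qed.

Definition ftrunc n (a : F) : {poly R} := \poly_(i < n.+1) a i.

Lemma ftrunc_coef n a i : (i <= n)%N -> (ftrunc n a)`_i = a i.
Proof. by move=> hi; rewrite coef_poly ltnS hi. Qed.

Lemma fmul_coef_poly n (a b : F) (p q : {poly R}) :
  (forall i, (i <= n)%N -> p`_i = a i) -> (forall i, (i <= n)%N -> q`_i = b i) ->
  fmul a b n = (p * q)`_n.
Proof.
move=> hp hq; rewrite coefM /fmul; apply: eq_bigr => i _.
by rewrite hp ?hq ?leq_subr // -ltnS.
Qed.

Lemma fmul_ftrunc n a b : fmul a b n = (ftrunc n a * ftrunc n b)`_n.
Proof. by apply: fmul_coef_poly => i hi; rewrite ftrunc_coef. Qed.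

Lemma fmulA : associative (@fmul R).
Proof.
move=> a b c; apply: funext => n.
have trunc_prod (u v : F) i : (i <= n)%N ->
    (ftrunc n u * ftrunc n v)`_i = fmul u v i.
  move=> hi; symmetry; apply: fmul_coef_poly => j hj;
  by rewrite ftrunc_coef // (leq_trans hj hi).
rewrite (@fmul_coef_poly n a (fmul b c) (ftrunc n a) (ftrunc n b * ftrunc n c));
  last 2 first; first by move=> i hi; rewrite ftrunc_coef.
  by move=> i /trunc_prod.
rewrite (@fmul_coef_poly n (fmul a b) c (ftrunc n a * ftrunc n b) (ftrunc n c));
  last 2 first; first by move=> i /trunc_prod.
  by move=> i hi; rewrite ftrunc_coef.
by rewrite mulrA.
Qed.

Lemma fmulC : commutative (@fmul R).
Proof. by move=> a b; apply: funext => n; rewrite !fmul_ftrunc mulrC. Qed.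

Lemma fmul1 : left_id (@fone R) (@fmul R).
Proof.
move=> a; apply: funext => n; rewrite (@fmul_coef_poly n _ _ 1 (ftrunc n a)).
- by rewrite mul1r ftrunc_coef.
- by move=> i _; rewrite coef1.
- by move=> i hi; rewrite ftrunc_coef.
Qed.

Lemma fmulDl : left_distributive (@fmul R) (@fadd R).
Proof.
move=> a b c; apply: funext => n; rewrite /fmul /fadd -big_split /=.
by apply: eq_bigr => i _; rewrite mulrDl.
Qed.

Lemma fone_neq0 : fone R != fzero.
Proof. by apply/eqP => /(congr1 (fun f => f 0%N)) /eqP; rewrite oner_eq0. Qed.
End FpsRing.

HB.instance Definition _ (R : fieldType) := Choice.on (fps R).
HB.instance Definition _ (R : fieldType) :=
  GRing.isZmodule.Build (fps R) (@faddA R) (@faddC R) (@fadd0 R) (@faddN R).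
HB.instance Definition _ (R : fieldType) :=
  GRing.Zmodule_isComNzRing.Build (fps R)
    (@fmulA R) (@fmulC R) (@fmul1 R) (@fmulDl R) (@fone_neq0 R).

Section Composition.
Variable R : fieldType.
Local Notation F := (fps R).
Local Notation X := (fX R).

Definition fcst (r : R) : F := fun n => if n is 0%N then r else 0.
Definition agree n (a b : F) := forall i, (i <= n)%N -> a i = b i.

Lemma fpowE (a : F) k : fpow a k = a ^+ k.
Proof. by elim: k => [//|k IH]; rewrite exprS /= IH. Qed.
Lemma fmulE (a b : F) : fmul a b = a * b. Proof. by []. Qed.
Lemma faddE (a b : F) : fadd a b = a + b. Proof. by []. Qed.
Lemma foneE : fone R = 1. Proof. by []. Qed.

Lemma fcoefD (a b : F) n : (a + b) n = a n + b n. Proof. by []. Qed.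
Lemma fcoefN (a : F) n : (- a) n = - a n. Proof. by []. Qed.
Lemma fcoefB (a b : F) n : (a - b) n = a n - b n. Proof. by []. Qed.
Lemma fcoef1 n : (1 : F) n = (n == 0%N)%:R. Proof. by []. Qed.
Lemma fcoefM (a b : F) n : (a * b) n = \sum_(i < n.+1) a i * b (n - i)%N.
Proof. by []. Qed.
Lemma fcoef_sum I (r : seq I) (P : pred I) (f : I -> F) n :
  (\sum_(i <- r | P i) f i) n = \sum_(i <- r | P i) f i n.
Proof. by elim/big_rec2: _ => // i y1 y2 _ <-. Qed.
Lemma fcoefMn (a : F) k n : (a *+ k) n = a n *+ k.
Proof. by elim: k => [|k IH]; rewrite ?mulr0n // !mulrS fcoefD IH. Qed.

Lemma fcoefcM r (a : F) n : (fcst r * a) n = r * a n.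
Proof.
by rewrite fcoefM big_ord_recl subn0 big1 ?addr0 // => i _; rewrite mul0r.
Qed.
Lemma fscaleE r (a : F) : fscale r a = fcst r * a.
Proof. by apply: funext => n; rewrite fcoefcM. Qed.

Lemma fcstM r s : fcst (r * s) = fcst r * fcst s.
Proof. by apply: funext => n; rewrite fcoefcM; case: n => //= _; rewrite mulr0. Qed.
Lemma fcstD r s : fcst (r + s) = fcst r + fcst s.
Proof. by apply: funext => n; rewrite fcoefD; case: n => //= _; rewrite addr0. Qed.
Lemma fcstN r : fcst (- r) = - fcst r.
Proof. by apply: funext => n; rewrite fcoefN; case: n => //= _; rewrite oppr0. Qed.
Lemma fcst1 : fcst 1 = 1. Proof. by apply: funext => -[]. Qed.
Lemma fcst0 : fcst 0 = 0. Proof. by apply: funext => -[]. Qed.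
Lemma fcstMn r k : fcst (r *+ k) = fcst r *+ k.
Proof. by elim: k => [|k IH]; rewrite ?mulr0n ?fcst0 // !mulrS fcstD IH. Qed.
Lemma fcstn k : fcst k%:R = k%:R.
Proof. by rewrite fcstMn fcst1. Qed.
Lemma fcst_sum I (r : seq I) (P : pred I) (f : I -> R) :
  fcst (\sum_(i <- r | P i) f i) = \sum_(i <- r | P i) fcst (f i).
Proof. by elim/big_rec2: _ => [|i y1 y2 _ <-]; rewrite ?fcst0 ?fcstD. Qed.

Lemma fcoef0M (a b : F) : (a * b) 0%N = a 0%N * b 0%N.
Proof. by rewrite fcoefM big_ord1. Qed.
Lemma fcoef0X (a : F) k : (a ^+ k) 0%N = a 0%N ^+ k.
Proof. by elim: k => [|k IH]; rewrite ?expr0 // !exprS fcoef0M IH. Qed.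

Lemma fcoefXM0 (a : F) : (X * a) 0%N = 0.
Proof. by rewrite fcoef0M mul0r. Qed.
Lemma fcoefXMS (a : F) n : (X * a) n.+1 = a n.
Proof.
rewrite fcoefM big_ord_recl mul0r add0r big_ord_recl subSS subn0 mul1r.
by rewrite big1 ?addr0 // => i _; rewrite mul0r.
Qed.
Lemma fcoefXnM (a : F) k n :
  (X ^+ k * a) n = if (k <= n)%N then a (n - k)%N else 0.
Proof.
elim: k n => [|k IH] n; first by rewrite expr0 mul1r subn0.
rewrite exprS -mulrA; case: n => [|n]; first by rewrite fcoefXM0.
by rewrite fcoefXMS IH ltnS subSS.
Qed.

Lemma fcoefX_lt (a : F) k i : a 0%N = 0 -> (i < k)%N -> (a ^+ k) i = 0.
Proof.
move=> a0; elim: k i => [//|k IH] i hi.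
rewrite exprS fcoefM big1 // => -[[|j] hj] _ /=; first by rewrite a0 mul0r.
by rewrite IH ?mulr0 //; lia.
Qed.

Lemma fcoefM_lt (u c : F) m i :
  (forall j, (j < m)%N -> c j = 0) -> (i < m)%N -> (u * c) i = 0.
Proof.
move=> hc hi; rewrite fcoefM big1 // => j _; rewrite hc ?mulr0 //.
exact: leq_ltn_trans (leq_subr _ _) hi.
Qed.

Lemma agreeM n (a a' b b' : F) :
  agree n a a' -> agree n b b' -> agree n (a * b) (a' * b').
Proof.
move=> ha hb i hi; rewrite !fcoefM; apply: eq_bigr => -[j hj] _ /=.
rewrite ha ?hb //; last by rewrite -ltnS (leq_trans hj).
exact: leq_trans (leq_subr _ _) hi.
Qed.

Lemma agree_funext (a b : F) : (forall n, agree n a b) -> a = b.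
Proof. by move=> h; apply: funext => n; apply: (h n). Qed.

(* The truncation of a at degree n, as a polynomial with constant-series
   coefficients: evaluating it at c approximates a(c(t)) up to degree n. *)
Definition cst_trunc n (a : F) : {poly F} := \poly_(i < n.+1) fcst (a i).

Lemma horner_cst_trunc n a (c : F) :
  (cst_trunc n a).[c] = \sum_(i < n.+1) fcst (a i) * c ^+ i.
Proof.
rewrite (@horner_coef_wide _ n.+1); last exact: size_poly.
by apply: eq_bigr => i _; rewrite coef_poly ltn_ord.
Qed.

Lemma agree_comp (a c : F) n :
  c 0%N = 0 -> agree n (fcomp a c) (cst_trunc n a).[c].
Proof.
move=> c0 i hi; rewrite horner_cst_trunc fcoef_sum /fcomp.
rewrite (big_ord_widen n.+1 (fun k => a k * fpow c k i)) // big_mkcond /=.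
apply: eq_bigr => -[k hk] _ /=; rewrite fcoefcM fpowE.
by case: ifP => // /negbT; rewrite -leqNgt => hik; rewrite fcoefX_lt ?mulr0.
Qed.

Lemma agree_horner (P Q : {poly F}) (c : F) n : c 0%N = 0 ->
  (forall k, (k <= n)%N -> P`_k = Q`_k) -> agree n P.[c] Q.[c].
Proof.
move=> c0 hPQ i hi; apply/eqP; rewrite -subr_eq0 -fcoefB -hornerN -hornerD.
rewrite horner_coef fcoef_sum; apply/eqP/big1 => -[k hk] _ /=.
have [hkn|hnk] := leqP k n; first by rewrite coefB hPQ // subrr mul0r.
by rewrite (@fcoefM_lt _ _ k) ?(leq_ltn_trans hi) // => j; apply: fcoefX_lt.
Qed.

Lemma fcomp0 (a c : F) : fcomp a c 0%N = a 0%N.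
Proof. by rewrite /fcomp big_ord1 /= mulr1. Qed.

Lemma fcompD (a b c : F) : fcomp (a + b) c = fcomp a c + fcomp b c.
Proof.
apply: funext => n; rewrite fcoefD /fcomp -big_split /=.
by apply: eq_bigr => i _; rewrite fcoefD mulrDl.
Qed.

Lemma fcomp_cst r (c : F) : fcomp (fcst r) c = fcst r.
Proof.
apply: funext => n; rewrite /fcomp big_ord_recl big1 => [|i _]; last by rewrite mul0r.
by case: n => [|n] /=; rewrite ?mulr1 ?mulr0 addr0.
Qed.

Lemma fcomp1 (c : F) : fcomp 1 c = 1.
Proof. by rewrite -fcst1 fcomp_cst. Qed.

Lemma fcompX (c : F) : c 0%N = 0 -> fcomp X c = c.
Proof.
move=> c0; apply: funext => n; rewrite /fcomp big_ord_recl /= mul0r add0r.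
case: n => [|n]; first by rewrite big_ord0 c0.
rewrite big_ord_recl /= mul1r big1 => [|i _]; last by rewrite mul0r.
by rewrite addr0 fmulE foneE mulr1.
Qed.

Lemma fcompM (a b c : F) : c 0%N = 0 -> fcomp (a * b) c = fcomp a c * fcomp b c.
Proof.
move=> c0; apply: agree_funext => n i hi.
rewrite (agree_comp (a * b) c0 hi).
rewrite (agreeM (agree_comp a c0) (agree_comp b c0) hi).
rewrite -hornerM; apply: (agree_horner c0 _ hi) => k hk.
rewrite coefM coef_poly ltnS hk fcoefM fcst_sum; apply: eq_bigr => -[j hj] _ /=.
have hj' : (j < n.+1)%N by lia.
have hkj : (k - j < n.+1)%N by lia.
by rewrite !coef_poly hj' hkj fcstM.
Qed.

Lemma fcompXn (a c : F) k : c 0%N = 0 -> fcomp (a ^+ k) c = fcomp a c ^+ k.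
Proof.
by move=> c0; elim: k => [|k IH]; rewrite ?expr0 ?fcomp1 // !exprS fcompM // IH.
Qed.
End Composition.

Section Derivative.
Variable R : fieldType.
Local Notation F := (fps R).
Local Notation X := (fX R).

Definition fderiv (a : F) : F := fun n => a n.+1 *+ n.+1.

Lemma fderiv_coef (a : F) n : fderiv a n = a n.+1 *+ n.+1. Proof. by []. Qed.

Lemma fderivD (a b : F) : fderiv (a + b) = fderiv a + fderiv b.
Proof. by apply: funext => n; rewrite /fderiv !fcoefD mulrnDl. Qed.
Lemma fderivN (a : F) : fderiv (- a) = - fderiv a.
Proof. by apply: funext => n; rewrite /fderiv !fcoefN mulNrn. Qed.
Lemma fderivB (a b : F) : fderiv (a - b) = fderiv a - fderiv b.
Proof. by rewrite fderivD fderivN. Qed.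
Lemma fderiv0 : fderiv 0 = 0.
Proof. by apply: funext => n; rewrite /fderiv mul0rn. Qed.
Lemma fderiv_cst (r : R) : fderiv (fcst r) = 0.
Proof. by apply: funext => n; rewrite /fderiv mul0rn. Qed.
Lemma fderiv1 : fderiv 1 = 0.
Proof. by rewrite -fcst1 fderiv_cst. Qed.
Lemma fderivX : fderiv X = 1.
Proof. by apply: funext => -[|n]; rewrite /fderiv /= ?mulr1n ?mul0rn. Qed.
Lemma fderiv_sum I (r : seq I) (P : pred I) (f : I -> F) :
  fderiv (\sum_(i <- r | P i) f i) = \sum_(i <- r | P i) fderiv (f i).
Proof. by elim/big_rec2: _ => [|i y1 y2 _ <-]; rewrite ?fderiv0 ?fderivD. Qed.

(* Leibniz rule, transported from the derivative of polynomials. *)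
Lemma fderivM (a b : F) : fderiv (a * b) = fderiv a * b + a * fderiv b.
Proof.
apply: funext => n; rewrite fcoefD /fderiv -!fmulE.
set p := ftrunc n.+1 a; set q := ftrunc n.+1 b.
have hp i : (i <= n.+1)%N -> p`_i = a i by move=> hi; rewrite ftrunc_coef.
have hq i : (i <= n.+1)%N -> q`_i = b i by move=> hi; rewrite ftrunc_coef.
have hpn i : (i <= n)%N -> p`_i = a i by move=> hi; rewrite hp // (leq_trans hi).
have hqn i : (i <= n)%N -> q`_i = b i by move=> hi; rewrite hq // (leq_trans hi).
rewrite (fmul_coef_poly hp hq) -coef_deriv derivM coefD.
rewrite (@fmul_coef_poly _ n _ _ p^`() q) ?(@fmul_coef_poly _ n _ _ p q^`()) //.
  by move=> i hi; rewrite coef_deriv hq.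
by move=> i hi; rewrite coef_deriv hp.
Qed.

Lemma fderivXn (a : F) k : fderiv (a ^+ k) = (a ^+ k.-1 * fderiv a) *+ k.
Proof.
elim: k => [|[|k] IH]; first by rewrite expr0 fderiv1 mulr0n.
  by rewrite expr1 expr0 mul1r.
rewrite exprS fderivM IH /= mulrnAr mulrA -exprS [fderiv a * _]mulrC.
by rewrite [in RHS]mulrS.
Qed.

Lemma fderiv_agree n (u v : F) : agree n.+1 u v -> agree n (fderiv u) (fderiv v).
Proof. by move=> h i hi; rewrite /fderiv h. Qed.

Lemma fderiv_comp (a c : F) :
  c 0%N = 0 -> fderiv (fcomp a c) = fcomp (fderiv a) c * fderiv c.
Proof.
move=> c0; apply: agree_funext => n i hi.
rewrite (fderiv_agree (agree_comp a c0) hi).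
rewrite (agreeM (agree_comp (fderiv a) c0) (fun _ _ => erefl) hi).
rewrite !horner_cst_trunc fderiv_sum big_ord_recl expr0 mulr1 fderiv_cst add0r.
rewrite big_distrl; congr (_ i); apply: eq_bigr => j _.
rewrite fderivM fderiv_cst mul0r add0r fderivXn /= /bump /= add1n add0n.
by rewrite fderiv_coef fcstMn mulrnAr !mulrnAl mulrA.
Qed.

Lemma fps_inv0 (h : F) : fps_inv h 0%N = (h 0%N)^-1.
Proof. by rewrite /fps_inv /= big_ord1 /= mulr1. Qed.

(* [fps_inv h] is the geometric series of h = h_0 (1 - v) truncated at
   degree n, which is exact up to degree n since v^{n+1} = O(t^{n+1}). *)
Lemma fps_invP (h : F) : h 0%N != 0 -> h * fps_inv h = 1.
Proof.
move=> h0; apply: funext => n.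
set v : F := fscale (-1) (fun n => if n == 0%N then 0 else h n / h 0%N).
have v0 : v 0%N = 0 by rewrite /v /fscale /= mulr0.
have hv : h = fcst (h 0%N) * (1 - v).
  apply: funext => -[|m]; rewrite fcoefcM fcoefB fcoef1 /v /fscale /=.
    by rewrite mulr0 subr0 mulr1.
  by rewrite sub0r mulN1r opprK mulrC divfK.
have hgeom : agree n (fps_inv h) (fcst (h 0%N)^-1 * \sum_(k < n.+1) v ^+ k).
  move=> i hi; rewrite fcoefcM fcoef_sum /fps_inv /=; congr (_ * _).
  rewrite (big_ord_widen n.+1 (fun k => fpow v k i)) // big_mkcond /=.
  apply: eq_bigr => -[k hk] _ /=; rewrite fpowE.
  by case: ifP => // /negbT; rewrite -leqNgt => hik; rewrite fcoefX_lt.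
rewrite (agreeM (fun _ _ => erefl) hgeom (leqnn n)).
have -> : h * (fcst (h 0%N)^-1 * \sum_(k < n.+1) v ^+ k) = 1 - v ^+ n.+1.
  rewrite {1}hv mulrCA !mulrA -fcstM mulVf // fcst1 mul1r.
  by rewrite -[1 - v]opprB mulNr -subrX1 opprB.
by rewrite fcoefB fcoefX_lt // subr0.
Qed.

Lemma fps_inv_uniq (h b : F) : h * b = 1 -> fps_inv h = b.
Proof.
move=> hb; have h0 : h 0%N != 0.
  apply/eqP => e; have := congr1 (fun f : F => f 0%N) hb.
  by rewrite fcoef0M e mul0r fcoef1 /= => /eqP; rewrite eq_sym oner_eq0.
by rewrite -[fps_inv h]mul1r -hb mulrAC fps_invP // mul1r.
Qed.

Lemma fps_invK (h : F) : h 0%N != 0 -> fps_inv (fps_inv h) = h.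
Proof. by move=> h0; apply: fps_inv_uniq; rewrite mulrC fps_invP. Qed.

Lemma fps_inv_comp (g c : F) :
  c 0%N = 0 -> g 0%N != 0 -> fps_inv (fcomp g c) = fcomp (fps_inv g) c.
Proof. by move=> c0 g0; apply: fps_inv_uniq; rewrite -fcompM // fps_invP // fcomp1. Qed.

Lemma fderiv_inv (h : F) :
  h 0%N != 0 -> fderiv (fps_inv h) = - (fderiv h * fps_inv h ^+ 2).
Proof.
move=> h0; have e := congr1 fderiv (fps_invP h0); rewrite fderiv1 fderivM in e.
have : fps_inv h * (fderiv h * fps_inv h + h * fderiv (fps_inv h)) = 0.
  by rewrite e mulr0.
rewrite mulrDr [fps_inv h * (h * _)]mulrA [fps_inv h * h]mulrC fps_invP // mul1r => /eqP.
by rewrite addr_eq0 => /eqP e2; rewrite -[fderiv _]opprK -e2 mulrCA -expr2.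
Qed.
End Derivative.

(* Over a field of characteristic 0 a series is determined by its derivative
   and constant term. *)
Section CharZero.
Variable R : fieldType.
Hypothesis charR0 : [pchar R] =i pred0.
Local Notation F := (fps R).
Local Notation X := (fX R).

Lemma natrS_neq0 n : n.+1%:R != 0 :> R.
Proof. by rewrite ((pcharf0P R).1 charR0). Qed.

Lemma mulrnIS n (x y : R) : x *+ n.+1 = y *+ n.+1 -> x = y.
Proof.
by rewrite -[x *+ _]mulr_natr -[y *+ _]mulr_natr => /mulIf; apply; apply: natrS_neq0.
Qed.

(* Uniqueness for the linear equation y' = y w: the difference d of two
   solutions satisfies d' = d w, so by induction all its coefficients vanish. *)
Lemma fode_uniq (y z w : F) :
  fderiv y = y * w -> fderiv z = z * w -> y 0%N = z 0%N -> y = z.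
Proof.
move=> hy hz yz0; apply/eqP; rewrite -subr_eq0; apply/eqP.
set d := y - z.
have hd : fderiv d = d * w by rewrite /d fderivB hy hz mulrBl.
have d0 : d 0%N = 0 by rewrite /d fcoefB yz0 subrr.
suff dn0 n i : (i <= n)%N -> d i = 0 by apply: funext => n; apply: (dn0 n).
elim: n i => [|n IH] i hi; first by move: hi; rewrite leqn0 => /eqP ->.
have [|hin] := leqP i n; first exact: IH.
have -> : i = n.+1 by apply/eqP; rewrite eqn_leq hi hin.
apply: (@mulrnIS n); rewrite mul0rn -fderiv_coef hd fcoefM big1 // => -[j hj] _.
by rewrite IH ?mul0r // -ltnS.
Qed.

Definition exp_ser : F := fun k => (k`!)%:R^-1.
Definition log1p_ser : F := fun k => (-1) ^+ k.+1 / k%:R.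

Lemma fexpE (b : F) : fexp b = fcomp exp_ser b.
Proof. by apply: funext => n; apply: eq_bigr => i _; rewrite mulrC. Qed.

Lemma flog1pE (h : F) : flog1p h = fcomp log1p_ser h.
Proof.
apply: funext => n; rewrite /flog1p /fcomp.
rewrite -(big_mkord xpredT (fun k => log1p_ser k * fpow h k n)).
by rewrite big_ltn // /log1p_ser invr0 mulr0 mul0r add0r.
Qed.

Lemma fderiv_exp_ser : fderiv exp_ser = exp_ser.
Proof.
apply: funext => n; rewrite fderiv_coef -mulr_natr /exp_ser factS natrM invfM.
by rewrite mulrAC mulVf ?mul1r // natrS_neq0.
Qed.

Lemma fderiv_log1p_ser : (1 + X) * fderiv log1p_ser = 1.
Proof.
have coef_n n : fderiv log1p_ser n = (-1) ^+ n.
  rewrite fderiv_coef -mulr_natr /log1p_ser -mulrA mulVf ?mulr1 ?natrS_neq0 //.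
  by rewrite !exprS !mulN1r opprK.
apply: funext => -[|n]; rewrite mulrDl mul1r fcoefD.
  by rewrite fcoefXM0 coef_n addr0.
by rewrite fcoefXMS !coef_n exprS mulN1r addNr.
Qed.

Lemma fexp0 (u : F) : fexp u 0%N = 1.
Proof. by rewrite fexpE fcomp0 /exp_ser invr1. Qed.

Lemma fderiv_fexp (u : F) : u 0%N = 0 -> fderiv (fexp u) = fexp u * fderiv u.
Proof. by move=> u0; rewrite !fexpE fderiv_comp // fderiv_exp_ser. Qed.

Lemma fderiv_flog (h : F) : h 0%N = 1 -> fderiv (flog h) = fderiv h * fps_inv h.
Proof.
move=> h0; have c0 : (h - 1) 0%N = 0 by rewrite fcoefB h0 subrr.
have flogE : flog h = fcomp log1p_ser (h - 1).
  by rewrite /flog flog1pE faddE fscaleE foneE fcstN fcst1 mulN1r.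
rewrite flogE fderiv_comp // fderivB fderiv1 subr0 mulrC; congr (_ * _).
have shift : fcomp (1 + X) (h - 1) = h by rewrite fcompD fcomp1 fcompX // addrC subrK.
rewrite -[in RHS]shift; symmetry; apply: fps_inv_uniq.
by rewrite -fcompM // fderiv_log1p_ser fcomp1.
Qed.

Lemma fpowc0 (h : F) a : fpowc h a 0%N = 1.
Proof. exact: fexp0. Qed.

Lemma fderiv_fpowc (h : F) a : h 0%N = 1 ->
  fderiv (fpowc h a) = fpowc h a * (fcst a * (fderiv h * fps_inv h)).
Proof.
move=> h0; rewrite /fpowc fscaleE fderiv_fexp; last first.
  by rewrite fcoefcM /flog /flog1p big_geq ?mulr0.
by rewrite fderivM fderiv_cst mul0r add0r fderiv_flog.
Qed.

Lemma fpowc_nat (h : F) k : h 0%N = 1 -> fpowc h k%:R = h ^+ k.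
Proof.
move=> h0; have hi : h 0%N != 0 by rewrite h0 oner_eq0.
apply: (@fode_uniq _ _ (fcst k%:R * (fderiv h * fps_inv h))).
- exact: fderiv_fpowc.
- rewrite fderivXn fcstn; case: k => [|k]; first by rewrite !mulr0n mul0r mulr0.
  transitivity (k.+1%:R * (h ^+ k * fderiv h) * (h * fps_inv h)).
    by rewrite fps_invP // mulr1 mulr_natl.
  by rewrite exprS; ring.
- by rewrite fpowc0 fcoef0X h0 expr1n.
Qed.

(* 1/h^a = (1/h)^a: both sides solve y' = - y a h'/h. *)
Lemma fps_inv_fpowc (h : F) a : h 0%N = 1 ->
  fps_inv (fpowc h a) = fpowc (fps_inv h) a.
Proof.
move=> h0; have hn0 : h 0%N != 0 by rewrite h0 oner_eq0.
have p0 : fpowc h a 0%N != 0 by rewrite fpowc0 oner_eq0.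
have ih0 : fps_inv h 0%N = 1 by rewrite fps_inv0 h0 invr1.
apply: (@fode_uniq _ _ (- (fcst a * (fderiv h * fps_inv h)))).
- rewrite fderiv_inv // fderiv_fpowc // mulrN; congr (- _).
  set P := fpowc h a; set W := fcst a * _.
  transitivity ((P * fps_inv P) * (fps_inv P * W)); first by ring.
  by rewrite fps_invP // mul1r.
- rewrite fderiv_fpowc // fderiv_inv // fps_invK //.
  transitivity (fpowc (fps_inv h) a * - (fcst a * (fderiv h * fps_inv h)) *
    (h * fps_inv h)); first by ring.
  by rewrite fps_invP // mulr1.
- by rewrite fps_inv0 !fpowc0 invr1.
Qed.

Lemma fcomp_fexp (y : R) (c : F) : c 0%N = 0 ->
  fcomp (fexp (fcst y * X)) c = fexp (fcst y * c).
Proof.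
move=> c0; have yX0 : (fcst y * X) 0%N = 0 by rewrite fcoefcM mulr0.
have yc0 : (fcst y * c) 0%N = 0 by rewrite fcoefcM c0 mulr0.
apply: (@fode_uniq _ _ (fcst y * fderiv c)).
- rewrite fderiv_comp // fderiv_fexp // fderivM fderiv_cst mul0r add0r fderivX.
  by rewrite mulr1 fcompM // fcomp_cst mulrA.
- by rewrite fderiv_fexp // fderivM fderiv_cst mul0r add0r.
- by rewrite fcomp0 !fexp0.
Qed.
End CharZero.

Section Lagrange.
Variable R : fieldType.
Hypothesis charR0 : [pchar R] =i pred0.
Local Notation F := (fps R).
Local Notation X := (fX R).
Variables phi fb : F.
Hypothesis phi0 : phi 0%N = 1.
Hypothesis fb0 : fb 0%N = 0.
Hypothesis fbK : fcomp (X * fps_inv phi) fb = X.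

Let Q := fcomp phi fb.
Let Qi := fps_inv Q.
Let Q0 : Q 0%N != 0. Proof. by rewrite /Q fcomp0 phi0 oner_eq0. Qed.
Let QQi : Q * Qi = 1. Proof. exact: fps_invP. Qed.
Let phi0_neq0 : phi 0%N != 0. Proof. by rewrite phi0 oner_eq0. Qed.

Lemma fb_XQ : fb = X * Q.
Proof.
have fbQi : fb * Qi = X.
  by rewrite -[RHS]fbK fcompM // fcompX // /Qi /Q fps_inv_comp.
by rewrite -fbQi -mulrA [Qi * Q]mulrC QQi mulr1.
Qed.

(* [t^d] Q^-(d+1) fb' = [d = 0]: for d > 0 the series is the sum of
   Q^-d and t (Q^-(d+1) Q'), whose [t^d] coefficients cancel since
   (Q^-d)' = -d Q^-(d+1) Q'. *)
Lemma coef_Qinv_deriv d : (Qi ^+ d.+1 * fderiv fb) d = (d == 0%N)%:R.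
Proof.
have decomp : Qi ^+ d.+1 * fderiv fb = Qi ^+ d + X * (Qi ^+ d.+1 * fderiv Q).
  rewrite {1}fb_XQ fderivM fderivX mul1r.
  transitivity (Qi ^+ d * (Q * Qi) + X * (Qi ^+ d.+1 * fderiv Q)).
    by rewrite exprS; ring.
  by rewrite QQi mulr1.
rewrite decomp fcoefD; case: d decomp => [|d] _; first by rewrite fcoefXM0 addr0.
have dQi : fderiv (Qi ^+ d.+1) = - (Qi ^+ d.+2 * fderiv Q) *+ d.+1.
  rewrite fderivXn /= fderiv_inv // -/Qi; congr (_ *+ _).
  by rewrite !exprS; ring.
have := congr1 (fun f : F => f d) dQi; rewrite fderiv_coef fcoefMn fcoefN.
by move/(mulrnIS charR0) ->; rewrite fcoefXMS addNr.
Qed.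

Lemma coef_residue (P : F) m : (Qi ^+ m.+1 * fcomp P fb * fderiv fb) m = P m.
Proof.
rewrite (@agreeM _ m _ (Qi ^+ m.+1 * (cst_trunc m P).[fb]) _ (fderiv fb)) //;
  last by apply: agreeM => //; apply: agree_comp.
rewrite horner_cst_trunc big_distrr big_distrl fcoef_sum /=.
have term (j : 'I_m.+1) : Qi ^+ m.+1 * (fcst (P j) * fb ^+ j) * fderiv fb =
    fcst (P j) * (X ^+ j * (Qi ^+ (m - j).+1 * fderiv fb)).
  case: j => j hj /=; have -> : m.+1 = ((m - j).+1 + j)%N by lia.
  transitivity (fcst (P j) * (X ^+ j * (Qi ^+ (m - j).+1 * fderiv fb)) *
    (Q * Qi) ^+ j); first by rewrite fb_XQ !exprMn exprD; ring.
  by rewrite QQi expr1n mulr1.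
rewrite (eq_bigr _ (fun j _ => congr1 (fun f : F => f m) (term j))) /=.
rewrite big_ord_recr /= fcoefcM fcoefXnM leqnn subnn coef_Qinv_deriv mulr1.
rewrite big1 ?add0r // => -[j hj] _ /=.
by rewrite fcoefcM fcoefXnM ltnW // coef_Qinv_deriv subn_eq0 leqNgt hj mulr0.
Qed.

(* phi^(N+1) (t/phi)' = phi^N - t phi^(N-1) phi'; the second term has
   coefficients read off from (phi^N)' = N phi^(N-1) phi'. *)
Lemma powS_deriv_X_over_phi N : (0 < N)%N ->
  phi ^+ N.+1 * fderiv (X * fps_inv phi) = phi ^+ N - X * (phi ^+ N.-1 * fderiv phi).
Proof.
move=> hN; rewrite -{1}(prednK hN) fderivM fderivX mul1r fderiv_inv //.
transitivity (phi ^+ N.-1.+1 * (phi * fps_inv phi) -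
  X * (phi ^+ N.-1 * fderiv phi) * (phi * fps_inv phi) ^+ 2).
  by rewrite !exprS; ring.
by rewrite fps_invP // expr1n !mulr1 prednK.
Qed.

Lemma lagrange_inversion N k : (0 < N)%N -> (k <= N)%N ->
  (fb ^+ k) N *+ N = (phi ^+ N) (N - k)%N *+ k.
Proof.
move=> hN hk; set m := (N - k)%N.
have coefQ : (fb ^+ k) N = (Q ^+ k) m by rewrite fb_XQ exprMn fcoefXnM hk.
(* Q^k is of the form Q^-(m+1) P(fb) fb' with P = phi^(N+1) (t/phi)'. *)
set P := phi ^+ N.+1 * fderiv (X * fps_inv phi).
have residue_form : Q ^+ k = Qi ^+ m.+1 * fcomp P fb * fderiv fb.
  have chain1 : fcomp (fderiv (X * fps_inv phi)) fb * fderiv fb = 1.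
    by rewrite -fderiv_comp // fbK fderivX.
  rewrite /P fcompM // fcompXn // -/Q.
  transitivity (Q ^+ k * (Qi * Q) ^+ m.+1 *
    (fcomp (fderiv (X * fps_inv phi)) fb * fderiv fb)).
    by rewrite chain1 [Qi * Q]mulrC QQi expr1n !mulr1.
  have -> : N.+1 = (k + m.+1)%N by rewrite /m; lia.
  by rewrite exprMn exprD; ring.
rewrite coefQ residue_form coef_residue /P powS_deriv_X_over_phi // fcoefB.
case hm : m => [|i].
  have -> : k = N by move: hm; rewrite /m; lia.
  by rewrite fcoefXM0 subr0.
rewrite fcoefXMS mulrnBl.
have := congr1 (fun f : F => f i) (fderivXn phi N).
rewrite fderiv_coef fcoefMn => <-.
rewrite -mulrnBr; last by move: hm; rewrite /m; lia.
by congr (_ *+ _); move: hm; rewrite /m; lia.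
Qed.

Lemma lagrange_comp_coef (H : F) N :
  fcomp H fb N.+1 = \sum_(l < N.+1)
    (phi ^+ N.+1) l * H (N.+1 - l)%N * ((N.+1 - l)%:R / N.+1%:R).
Proof.
rewrite /fcomp big_ord_recl /= mulr0 add0r (reindex_inj rev_ord_inj) /=.
apply: eq_bigr => -[l hl] _ /=; rewrite /bump /= add1n subSS fpowE.
have hk : (N - l).+1 = (N.+1 - l)%N by lia.
have lag := lagrange_inversion (ltn0Sn N) (leq_subr l N.+1).
rewrite (subKn (ltnW hl)) in lag.
rewrite fmulE -exprS add0n hk.
have -> : (fb ^+ (N.+1 - l)) N.+1 = (phi ^+ N.+1) l * (N.+1 - l)%:R / N.+1%:R.
  by rewrite mulr_natr -lag -[(fb ^+ _) _ *+ _]mulr_natr mulfK // natrS_neq0.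
by rewrite !mulrA [H _ * _]mulrC.
Qed.
End Lagrange.

Lemma sheffer_compE (R : fieldType) (charR0 : [pchar R] =i pred0)
    (g f : fps R) (S : nat -> {poly R}) :
  g 0%N != 0 -> is_sheffer g f S ->
  exists fb : fps R, [/\ fb 0%N = 0, fcomp f fb = fX R &
    forall y n, (S n).[y] = n`!%:R * fcomp (fps_inv g * fexp (fcst y * fX R)) fb n].
Proof.
move=> g0 [fb [fb0 [fbK hS]]]; exists fb; split => // y n.
by rewrite hS fcompM // fcomp_fexp // fps_inv_comp // fscaleE.
Qed.

Lemma euler_polyE (R : fieldType) (charR0 : [pchar R] =i pred0) (alpha x : R) n :
  euler_poly n alpha x = n`!%:R *
    (fps_inv (fpowc (fscale 2^-1 (fadd (fexp (fX R)) (fone R))) alpha) *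
     fexp (fcst x * fX R)) n.
Proof.
set e := fadd (fexp (fX R)) (fone R).
have two0 : (2 : R) != 0 by apply: (natrS_neq0 charR0 1).
have e0 : e 0%N = 2 by rewrite /e faddE fcoefD fexp0.
have h0 : fscale 2^-1 e 0%N = 1 by rewrite fscaleE fcoefcM e0 mulVf.
have hinv : fps_inv (fscale 2^-1 e) = fscale 2 (fps_inv e).
  apply: fps_inv_uniq; rewrite !fscaleE mulrCA !mulrA -fcstM mulfV // fcst1 mul1r.
  by rewrite fps_invP // e0.
by rewrite /euler_poly fps_inv_fpowc // hinv fmulE !fscaleE.
Qed.

Lemma flogq0 (R : fieldType) : flogq R 0%N = 1.
Proof.
by rewrite /flogq /flog1p big_nat1 fpowE expr1 expr2 mulN1r opprK mul1r invr1 mul1r.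
Qed.

Lemma narumi_pow (R : fieldType) (charR0 : [pchar R] =i pred0) l k :
  narumi l k%:R = l`!%:R * (flogq R ^+ k) l.
Proof. by rewrite /narumi fpowc_nat // flogq0. Qed.

Lemma fact_ratio (R : fieldType) (charR0 : [pchar R] =i pred0) N l : (l <= N)%N ->
  N.+1`!%:R * ((N.+1 - l)%:R / N.+1%:R) =
  'C(N, l)%:R * l`!%:R * (N.+1 - l)`!%:R :> R.
Proof.
move=> hlN; have -> : (N.+1 - l = (N - l).+1)%N by lia.
rewrite [N.+1`!]factS [(N - l).+1`!]factS -(bin_fact hlN) !natrM.
by field; rewrite -mulrS natrS_neq0.
Qed.

Theorem theorem4 (R : fieldType) (hR : [pchar R] =i pred0) (alpha : R)
  (S : nat -> {poly R}) :
  is_sheffer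
    (fpowc (fscale 2^-1 (fadd (fexp (fX R)) (fone R))) alpha)
    (fmul (fX R) (fps_inv (flogq R))) S ->
  forall (n : nat), (1 <= n)%N -> forall x : R,
    (S n).[x] = \sum_(l < n) ('C(n.-1, l))%:R * narumi l (n%:R) * euler_poly (n - l) alpha x.
Proof.
move=> /(sheffer_compE hR) [|fb [fb0 fbK hS]]; first by rewrite fpowc0 oner_eq0.
case=> // N _ x; rewrite hS (lagrange_comp_coef hR (flogq0 R) fb0 fbK) mulr_sumr.
apply: eq_bigr => -[l hl] _ /=.
rewrite narumi_pow // euler_polyE //.
set a := (flogq R ^+ N.+1) l; set h := (_ * _ : fps R) (N.+1 - l)%N.
transitivity (N.+1`!%:R * ((N.+1 - l)%:R / N.+1%:R) * (a * h)); first by ring.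
by rewrite (@fact_ratio _ hR N l hl); ring.
Qed.
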